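(* Let $t$ be an integer with $m=2t+1\geq 11$, $n=2^m+1$ and $\delta_2=\frac{n-3}{6}$. If $x$ is an odd integer with $\delta_2+2\leq x\leq \delta_2+2^{2t-4}$, then $x$ is not a coset leader modulo $n$.
   Context: For $n=2^m+1$ and an integer $x$, the 2-cyclotomic coset of $x$ modulo $n$ is $C_x=\{x\cdot 2^{j} \bmod n : j\geq 0\}\subseteq\{0,1,\dots,n-1\}$. For $0\leq x\leq n-1$, ''$x$ is a coset leader'' means that $x$ is the smallest element of $C_x$. *)

From mathcomp Require Import all_boot.
Set Implicit Arguments. Unset Strict Implicit. Unset Printing Implicit Defensive.

Definition in_coset (n x y : nat) : Prop := exists j : nat, y = (x * 2 ^ j) %% n.

Definition coset_leader (n x : nat) : Prop :=
  x < n /\ forall y, in_coset n x y -> x <= y.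

(* Since 2^m = -1 (mod n), the coset of x is closed under y |-> n - y, so all
   elements of the coset of a leader x lie in [x, n - x], which is inside
   (n/6, 5n/6) when n/6 < x < n/3.  Doubling modulo n sends the outer band
   (n/6, n/3) u (2n/3, 5n/6) into the middle band (n/3, 2n/3), and sends the
   middle band back into the outer one as long as it stays in (n/6, 5n/6).
   Starting from x in the outer band, the odd iterate x 2^m therefore lies in
   the middle band; but it equals n - x, which lies in the outer band. *)

From mathcomp Require Import all_boot zify.

Definition outer_band (n y : nat) : bool :=
  (n < 6 * y < 2 * n) || (4 * n < 6 * y < 5 * n).

Definition middle_band (n y : nat) : bool := n < 3 * y < 2 * n.

Lemma double_outer_band (n y : nat) :
  outer_band n y -> middle_band n ((2 * y) %% n).
Proof.
case/orP=> band; first by rewrite modn_small /middle_band; lia.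
have -> : 2 * y = 1 * n + (2 * y - n) by lia.
by rewrite modnMDl modn_small /middle_band; lia.
Qed.

Lemma double_middle_band (n y : nat) :
  middle_band n y -> n < 6 * ((2 * y) %% n) < 5 * n ->
  outer_band n ((2 * y) %% n).
Proof.
rewrite /middle_band /outer_band => band.
have [small|large] := ltnP (2 * y) n; first by rewrite modn_small //; lia.
have -> : 2 * y = 1 * n + (2 * y - n) by lia.
by rewrite modnMDl modn_small; lia.
Qed.

Lemma mul_exp2_mod_opp (m y : nat) :
  0 < y < 2 ^ m + 1 -> (y * 2 ^ m) %% (2 ^ m + 1) = 2 ^ m + 1 - y.
Proof.
move=> y_range.
have -> : y * 2 ^ m = (y - 1) * (2 ^ m + 1) + (2 ^ m + 1 - y) by nia.
by rewrite modnMDl modn_small //; lia.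
Qed.

Section LeaderOrbit.

Variables m x : nat.
Local Notation n := (2 ^ m + 1).
Local Notation orbit j := ((x * 2 ^ j) %% n).
Hypothesis leader : coset_leader n x.

Lemma orbitS (j : nat) : orbit j.+1 = (2 * orbit j) %% n.
Proof. by rewrite expnS mulnCA modnMmr. Qed.

Lemma leader_le_orbit (j : nat) : x <= orbit j.
Proof. by case: leader => _ least; apply: least; exists j. Qed.

Lemma orbit_le_opp_leader (j : nat) : 0 < x -> orbit j <= n - x.
Proof.
move=> x_pos; have orbit_lt : orbit j < n by rewrite ltn_mod addn1.
have := leader_le_orbit (j + m).
rewrite expnD mulnA -modnMml mul_exp2_mod_opp;
  move: orbit_lt (leader_le_orbit j); move: (orbit j) => y; lia.
Qed.

Hypothesis x_sixth_third : n < 6 * x < 2 * n.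

Lemma orbit_even_outer (i : nat) : outer_band n (orbit (2 * i)).
Proof.
elim: i => [|i IH].
  by rewrite muln0 expn0 muln1 modn_small /outer_band; lia.
have orbit_inside : n < 6 * orbit (2 * i).+2 < 5 * n.
  by have := leader_le_orbit (2 * i).+2; have := orbit_le_opp_leader (2 * i).+2; lia.
rewrite mulnS add2n orbitS in orbit_inside *.
by apply: double_middle_band => //; rewrite orbitS; apply: double_outer_band.
Qed.

Lemma orbit_odd_middle (i : nat) : middle_band n (orbit (2 * i).+1).
Proof. by rewrite orbitS; apply: double_outer_band; apply: orbit_even_outer. Qed.

End LeaderOrbit.

Lemma not_coset_leader_sixth_third (m x : nat) :
  odd m -> 2 ^ m + 1 < 6 * x < 2 * (2 ^ m + 1) -> ~ coset_leader (2 ^ m + 1) x.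
Proof.
move=> odd_m x_range leader.
have m_half : m = (2 * m./2).+1 by rewrite -[in LHS](odd_double_half m) odd_m; lia.
have := orbit_odd_middle m x leader x_range m./2.
by rewrite -m_half mul_exp2_mod_opp /middle_band; lia.
Qed.

Theorem lemma3p3 (t x : nat) :
  11 <= 2 * t + 1 ->
  odd x ->
  ((2 ^ (2 * t + 1) + 1 - 3) %/ 6 + 2 <= x) ->
  (x <= (2 ^ (2 * t + 1) + 1 - 3) %/ 6 + 2 ^ (2 * t - 4)) ->
  ~ coset_leader (2 ^ (2 * t + 1) + 1) x.
Proof.
move=> t_ge5 _ x_ge x_le; apply: not_coset_leader_sixth_third.
  by rewrite addn1 /= oddM.
have exp_split : 2 ^ (2 * t + 1) = 32 * 2 ^ (2 * t - 4).
  by rewrite -[32]/(2 ^ 5) -expnD; congr (_ ^ _); lia.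
move: x_ge x_le; rewrite exp_split.
have : 0 < 2 ^ (2 * t - 4) by rewrite expn_gt0.
lia.
Qed.
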